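(* Let $m \geq 0$, $n \geq 1$ be integers and let $c = (c^t; c^b)$ be a sorted deterministically recurrent configuration on $K_{m,n}^0$. Let $k_j := |\{ i \in \{1,\ldots,m\} : c^t_i < j\}|$ for $j \in \{1,\ldots,n\}$, and let $(F_1, F_2) := (F(k), F(c^b))$. Then $\mathrm{Diff}(F_1, F_2) = \Phi(c)$; that is, $\Phi = \mathrm{Diff} \circ \Psi$ on sorted deterministically recurrent configurations, where $\Psi(c) := (F(k), F(c^b))$.
   Context: $K_{m,n}^0$ is the complete bipartite graph with ''top'' vertices $v^t_0, \ldots, v^t_m$ and ''bottom'' vertices $v^b_1, \ldots, v^b_n$, with an edge between every top and every bottom vertex; $v^t_0$ is the sink. A configuration is a vector $c = (c^t_1, \ldots, c^t_m; c^b_1, \ldots, c^b_n)$ of non-negative integers; it is sorted if $c^t$, $c^b$ are weakly increasing, stable if $c^t_i < n$ and $c^b_j < m+1$ for all $i,j$. Abelian sandpile model (ASM): an unstable non-sink vertex topples by sending one grain to each neighbour (bottom vertices also to the sink); grains sent to the sink disappear. In the Markov chain on stable configurations which adds a grain to a uniformly random non-sink vertex and stabilises by the ASM, a stable configuration is deterministically recurrent if it is a recurrent state. Ferrers diagrams: for a weakly increasing sequence $s=(s_1,\ldots,s_r)$ of non-negative integers, $F(s)$ is the left-aligned diagram with $s_i$ unit cells in row $i$, rows numbered from bottom to top; we place it with its bottom-left corner at the origin, so row $i$ occupies cells $[x-1,x]\times[i-1,i]$ for $1 \le x \le s_i$. For $F_1 = F(s)$ and $F_2 = F(s')$ with $s,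 s'$ of length $n$ and $s_n = s'_n = m$: let $F_1' := F(0, s_1, \ldots, s_{n-1}, s_n + 1)$ (add an empty row at the bottom and one cell to the top row) and $F_2' := F(s'_1 + 1, \ldots, s'_n + 1, m+1)$ (add one cell to each row and a full row of $m+1$ cells at the top). $\mathrm{Diff}(F_1,F_2) := F_2' \setminus F_1'$ is the set of unit cells of $F_2'$ not in $F_1'$. A parallelogram polyomino in the box $[0,m+1]\times[0,n]$ is the set of unit cells lying between two lattice paths $\mathcal{U}$ (upper) and $\mathcal{L}$ (lower) from $(0,0)$ to $(m+1,n)$ with steps $N=(0,1)$, $E=(1,0)$, which meet only at their endpoints. The Dukes–Le Borgne map $\Phi$: for a sorted stable $c$, $\mathcal{U}(c^t)$ is the path from $(0,0)$ to $(m+1,n)$ whose $E$ steps occur at heights $1+c^t_1, \ldots, 1+c^t_m, n$ (in this order), and $\mathcal{L}(c^b)$ is the path from $(0,0)$ to $(m+1,n)$ whose $N$ steps occur at $x$-coordinates $1+c^b_1, \ldots, 1+c^b_n$; $\Phi(c)$ is the set of unit cells between $\mathcal{U}(c^t)$ and $\mathcal{L}(c^b)$. It is known that $\Phi$ is a bijection from sorted deterministically recurrent configurations on $K_{m,n}^0$ to parallelogram polyominoes with bounding box $[0,m+1]\times[0,n]$. *)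

From mathcomp Require Import all_boot.
Set Implicit Arguments. Unset Strict Implicit. Unset Printing Implicit Defensive.

(* Configurations on K_{m,n}^0.  Top non-sink vertices v^t_1..v^t_m are
   indexed by 'I_m (v^t_{i+1} <-> i), bottom vertices v^b_1..v^b_n by 'I_n.
   The sink v^t_0 carries no grains. *)
Definition config (m n : nat) := ({ffun 'I_m -> nat} * {ffun 'I_n -> nat})%type.

Definition ctop m n (c : config m n) : 'I_m -> nat := c.1.
Definition cbot m n (c : config m n) : 'I_n -> nat := c.2.

Definition stable m n (c : config m n) : bool :=
  [forall i, ctop c i < n] && [forall j, cbot c j < m.+1].

Definition sorted_config m n (c : config m n) : Prop :=
  (forall i j : 'I_m, i <= j -> ctop c i <= ctop c j) /\
  (forall i j : 'I_n, i <= j -> cbot c i <= cbot c j).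

Definition topple_top m n (c : config m n) (i : 'I_m) : config m n :=
  ([ffun i' => if i' == i then ctop c i' - n else ctop c i'],
   [ffun j => (cbot c j).+1]).

(* Toppling a bottom vertex (degree m+1): one grain to every top vertex,
   the grain sent to the sink disappears. *)
Definition topple_bot m n (c : config m n) (j : 'I_n) : config m n :=
  ([ffun i => (ctop c i).+1],
   [ffun j' => if j' == j then cbot c j' - m.+1 else cbot c j']).

Inductive topple_step m n (c : config m n) : config m n -> Prop :=
| TStepTop (i : 'I_m) : n <= ctop c i -> topple_step c (topple_top c i)
| TStepBot (j : 'I_n) : m.+1 <= cbot c j -> topple_step c (topple_bot c j).

Inductive rtclos (T : Type) (R : T -> T -> Prop) (x : T) : T -> Prop :=
| rt_refl : rtclos R x x
| rt_step (y z : T) : rtclos R x y -> R y z -> rtclos R x z.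

Definition stabilises_to m n (c c' : config m n) : Prop :=
  rtclos (@topple_step m n) c c' /\ stable c'.

Definition add_grain m n (c : config m n) (v : 'I_m + 'I_n) : config m n :=
  match v with
  | inl i => ([ffun i' => if i' == i then (ctop c i').+1 else ctop c i'], c.2)
  | inr j => (c.1, [ffun j' => if j' == j then (cbot c j').+1 else cbot c j'])
  end.

(* Positive-probability transitions of the Markov chain on stable
   configurations (each non-sink vertex is chosen with probability
   1/(m+n) > 0). *)
Definition mc_step m n (c c' : config m n) : Prop :=
  stable c /\ exists v, stabilises_to (add_grain c v) c'.

(* A state of the finite Markov chain is recurrent iff every state
   reachable from it can reach it back. *)
Definition det_recurrent m n (c : config m n) : Prop :=
  stable c /\
  forall c', rtclos (@mc_step m n) c c' -> rtclos (@mc_step m n) c' c.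

(* Cells: the unit cell [x-1,x] x [y-1,y] is denoted by (x, y), x, y >= 1. *)

(* Ferrers diagram F(s): row i (1-based) has s_i cells. *)
Definition ferrers (s : seq nat) (x y : nat) : bool :=
  [&& 1 <= y, y <= size s, 1 <= x & x <= nth 0 s y.-1].

Definition F1prime (s : seq nat) : seq nat :=
  0 :: take (size s).-1 s ++ [:: (last 0 s).+1].
Definition F2prime (m : nat) (s' : seq nat) : seq nat :=
  map succn s' ++ [:: m.+1].

Definition Diff (m : nat) (s s' : seq nat) (x y : nat) : bool :=
  ferrers (F2prime m s') x y && ~~ ferrers (F1prime s) x y.

Definition k_seq m n (c : config m n) : seq nat :=
  [seq #|[pred i : 'I_m | ctop c i < j]| | j <- iota 1 n].
Definition cbot_seq m n (c : config m n) : seq nat :=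
  [seq cbot c j | j <- enum 'I_n].

(* Upper path U(c^t): its x-th E step (x = 1..m+1), spanning [x-1,x],
   is at height (upper_heights c)_x = 1 + c^t_x for x <= m, and n for x = m+1. *)
Definition upper_heights m n (c : config m n) : seq nat :=
  [seq (ctop c i).+1 | i <- enum 'I_m] ++ [:: n].
(* Lower path L(c^b): its y-th N step (y = 1..n), spanning [y-1,y],
   is at x-coordinate 1 + c^b_y. *)
Definition lower_xs m n (c : config m n) : seq nat :=
  [seq (cbot c j).+1 | j <- enum 'I_n].

(* Phi(c): the cells in the box [0,m+1]x[0,n] lying below U (y <= height of
   U over column x) and to the left of / above L (x <= x-coordinate of L's
   vertical step in row y). *)
Definition Phi m n (c : config m n) (x y : nat) : bool :=
  [&& 1 <= x, x <= m.+1, 1 <= y, y <= n,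
      y <= nth 0 (upper_heights c) x.-1 & x <= nth 0 (lower_xs c) y.-1].

(* Compare the diagrams row by row.  For 1 <= y <= n, row y of Diff(F(k), F(c^b))
   consists of the cells k_(y-1) < x <= c^b_y + 1 (with k_0 = 0).  A cell of row y
   lies in Phi(c) iff x <= c^b_y + 1 and it is under the upper path, i.e. x = m + 1
   or y - 1 <= c^t_x; since c^t is sorted, c^t_x >= y - 1 exactly when x exceeds
   the number k_(y-1) of top values below y - 1, and x <= m + 1 is automatic because
   c^b_y <= m by stability.  Row n + 1 of Diff is empty since stability gives
   k_n = m. *)

From mathcomp Require Import all_boot.

Set Implicit Arguments.
Unset Strict Implicit.
Unset Printing Implicit Defensive.

Lemma card_ord_lt m k : k <= m -> #|[pred i : 'I_m | i < k]| = k.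
Proof.
move=> le_km; have widen_inj : injective (widen_ord le_km).
  by move=> i i' /(congr1 val) /= /val_inj.
rewrite -[RHS]card_ord -(card_imset _ widen_inj).
apply: eq_card => i; rewrite inE; apply/idP/imsetP => [lt_ik | [i' _ ->]].
- by exists (Ordinal lt_ik) => //; apply: val_inj.
- exact: (ltn_ord i').
Qed.

Lemma card_lt_sorted_leq m (f : 'I_m -> nat) :
    {homo f : i j / i <= j} ->
  forall j (i : 'I_m), (#|[pred k | f k < j]| <= i) = (j <= f i).
Proof.
move=> f_homo j i; case: (leqP j (f i)) => [le_j_fi | lt_fi_j].
- rewrite -(card_ord_lt (ltnW (ltn_ord i))); apply: subset_leq_card.
  apply/subsetP => k; rewrite !inE; apply: contraLR; rewrite -!leqNgt.
  by move/f_homo; apply: leq_trans.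
- apply/negbTE; rewrite -ltnNge -(card_ord_lt (ltn_ord i)).
  apply: subset_leq_card; apply/subsetP => k; rewrite !inE ltnS => /f_homo.
  by move/leq_ltn_trans; apply.
Qed.

Lemma F1prime_map_iota (f : nat -> nat) n :
  f 0 = 0 -> 0 < n ->
  F1prime [seq f j | j <- iota 1 n] = [seq f j | j <- iota 0 n] ++ [:: (f n).+1].
Proof.
case: n => // n f0 _; rewrite /F1prime size_map size_iota.
have -> : iota 1 n.+1 = iota 1 n ++ [:: n.+1] by rewrite -(addn1 n) iotaD add1n addn1.
by rewrite map_cat /= take_size_cat ?size_map ?size_iota // last_cat f0.
Qed.

Definition top_count m n (c : config m n) (j : nat) : nat :=
  #|[pred i : 'I_m | ctop c i < j]|.

Section Rows.

Variables (m n : nat) (c : config m n).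

Lemma top_count0 : top_count c 0 = 0.
Proof. exact: eq_card0. Qed.

Lemma top_count_le j : top_count c j <= m.
Proof. exact: leq_trans (max_card _) (eq_leq (card_ord m)). Qed.

Lemma F2prime_cbot_seq : F2prime m (cbot_seq c) = lower_xs c ++ [:: m.+1].
Proof. by rewrite /F2prime /cbot_seq -map_comp. Qed.

Lemma size_lower_xs : size (lower_xs c) = n.
Proof. by rewrite size_map size_enum_ord. Qed.

Lemma nth_lower_xs (j : 'I_n) : nth 0 (lower_xs c) j = (cbot c j).+1.
Proof. by rewrite (nth_map j) ?size_enum_ord // nth_ord_enum. Qed.

Lemma size_F2prime_cbot_seq : size (F2prime m (cbot_seq c)) = n.+1.
Proof. by rewrite F2prime_cbot_seq size_cat size_lower_xs addn1. Qed.

Lemma nth_F2prime_cbot_seq (j : 'I_n) :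
  nth 0 (F2prime m (cbot_seq c)) j = (cbot c j).+1.
Proof. by rewrite F2prime_cbot_seq nth_cat size_lower_xs ltn_ord nth_lower_xs. Qed.

Lemma nth_F2prime_cbot_seq_n : nth 0 (F2prime m (cbot_seq c)) n = m.+1.
Proof. by rewrite F2prime_cbot_seq nth_cat size_lower_xs ltnn subnn. Qed.

Lemma nth_upper_heights (i : 'I_m) : nth 0 (upper_heights c) i = (ctop c i).+1.
Proof.
by rewrite nth_cat size_map size_enum_ord ltn_ord (nth_map i) ?size_enum_ord // nth_ord_enum.
Qed.

Lemma nth_upper_heights_m : nth 0 (upper_heights c) m = n.
Proof. by rewrite nth_cat size_map size_enum_ord ltnn subnn. Qed.

Hypothesis n_gt0 : 0 < n.

Lemma F1prime_k_seq :
  F1prime (k_seq c) = [seq top_count c j | j <- iota 0 n] ++ [:: (top_count c n).+1].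
Proof. exact: F1prime_map_iota top_count0 n_gt0. Qed.

Lemma size_F1prime_k_seq : size (F1prime (k_seq c)) = n.+1.
Proof. by rewrite F1prime_k_seq size_cat size_map size_iota addn1. Qed.

Lemma nth_F1prime_k_seq r : r < n -> nth 0 (F1prime (k_seq c)) r = top_count c r.
Proof.
move=> lt_rn; rewrite F1prime_k_seq nth_cat size_map size_iota lt_rn.
by rewrite (nth_map 0) ?size_iota // nth_iota.
Qed.

Lemma nth_F1prime_k_seq_n : nth 0 (F1prime (k_seq c)) n = (top_count c n).+1.
Proof. by rewrite F1prime_k_seq nth_cat size_map size_iota ltnn subnn. Qed.

Lemma Diff_row (j : 'I_n) x :
  Diff m (k_seq c) (cbot_seq c) x j.+1 = (top_count c j < x <= (cbot c j).+1).
Proof.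
rewrite /Diff /ferrers size_F2prime_cbot_seq size_F1prime_k_seq /= ltnS (ltnW (ltn_ord j)).
rewrite nth_F2prime_cbot_seq nth_F1prime_k_seq //.
by case: x => [|x] //=; rewrite -leqNgt ltnS andbC.
Qed.

Hypothesis top_sorted : forall i j : 'I_m, i <= j -> ctop c i <= ctop c j.
Hypothesis c_stable : stable c.

Lemma top_count_n : top_count c n = m.
Proof.
move: c_stable => /andP[/forallP top_lt _].
by rewrite -[RHS]card_ord; apply: eq_card => i; rewrite inE top_lt.
Qed.

Lemma cbot_le j : cbot c j <= m.
Proof. by move: c_stable => /andP[_ /forallP]; apply. Qed.

Lemma ltn_upper_heights r x :
  r < n -> x <= m -> (r < nth 0 (upper_heights c) x) = (top_count c r <= x).
Proof.
move=> lt_rn; rewrite leq_eqVlt => /orP[/eqP -> | lt_xm].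
- by rewrite nth_upper_heights_m lt_rn top_count_le.
- by rewrite -[x]/(val (Ordinal lt_xm)) nth_upper_heights ltnS card_lt_sorted_leq.
Qed.

Lemma Phi_row (j : 'I_n) x : Phi c x j.+1 = (top_count c j < x <= (cbot c j).+1).
Proof.
rewrite /Phi ltn_ord nth_lower_xs /=; case: x => [|x] //=; rewrite !ltnS.
case: (leqP x (cbot c j)) => [le_x_cb | _]; last by rewrite !andbF.
have le_xm := leq_trans le_x_cb (cbot_le j).
by rewrite le_xm ltn_upper_heights // andbT.
Qed.

Lemma Diff_top x : Diff m (k_seq c) (cbot_seq c) x n.+1 = false.
Proof.
rewrite /Diff /ferrers size_F2prime_cbot_seq size_F1prime_k_seq /=.
by rewrite nth_F2prime_cbot_seq_n nth_F1prime_k_seq_n top_count_n andbN.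
Qed.

End Rows.

Theorem theorem4p9 (m n : nat) (c : config m n) :
  1 <= n -> sorted_config c -> det_recurrent c ->
  forall x y : nat, Diff m (k_seq c) (cbot_seq c) x y = Phi c x y.
Proof.
move=> n_gt0 [top_sorted _] [c_stable _] x [|r]; first by rewrite /Diff /ferrers /Phi !andbF.
have Phi_out : n <= r -> Phi c x r.+1 = false.
  by move=> le_nr; rewrite /Phi [r < n]ltnNge le_nr !andbF.
case: (ltngtP r n) => [lt_rn | gt_rn | eq_rn].
- rewrite -[r]/(val (Ordinal lt_rn)).
  by rewrite (Diff_row _ n_gt0) (Phi_row top_sorted c_stable).
- rewrite Phi_out ?(ltnW gt_rn) // /Diff /ferrers size_F2prime_cbot_seq.
  by rewrite [r < n.+1]ltnNge gt_rn !andbF.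
- by rewrite Phi_out ?eq_rn // (Diff_top n_gt0 c_stable).
Qed.
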